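(* Let $2\le k\le n$. For every strong digraph $D$ of order $n$, $1\le\kappa_k(D)\le n-1$. Moreover, both bounds are sharp, and $\kappa_k(D)=n-1$ holds if and only if $D\cong\overleftrightarrow{K}_n$ and $k\notin\{4,6\}$.
   Context: Digraphs are finite, without loops and without parallel arcs. $\overleftrightarrow{K}_n$ is the complete digraph on $n$ vertices (both arcs $uv$ and $vu$ for every pair of distinct vertices). A digraph is strong if for every ordered pair of vertices $u,v$ there is a directed path from $u$ to $v$; a one-vertex digraph is strong. For $S\subseteq V(D)$, strong subgraphs $D_1,\dots,D_p$ each containing $S$ are $S$-internally disjoint if $V(D_i)\cap V(D_j)=S$ and $A(D_i)\cap A(D_j)=\emptyset$ for all $i<j$. $\kappa_S(D)$ is the maximum number of $S$-internally disjoint strong subgraphs containing $S$, and $\kappa_k(D)=\min\{\kappa_S(D): S\subseteq V(D),\ |S|=k\}$. *)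

From mathcomp Require Import all_boot.
Set Implicit Arguments. Unset Strict Implicit. Unset Printing Implicit Defensive.

(* A digraph on a finite vertex type V is an arc relation D : rel V
   (no parallel arcs automatically; loops excluded by [irreflexive D]). *)

Definition strong (V : finType) (D : rel V) : Prop :=
  forall u v : V, connect D u v.

Definition is_subgraph (V : finType) (D : rel V) (Vs : {set V}) (As : {set V * V}) : bool :=
  [forall a in As, [&& D a.1 a.2, a.1 \in Vs & a.2 \in Vs]].

Definition strong_sub (V : finType) (Vs : {set V}) (As : {set V * V}) : bool :=
  [forall u in Vs, forall v in Vs, connect [rel x y | (x, y) \in As] u v].

Definition S_packing (V : finType) (D : rel V) (S : {set V}) (p : nat) : bool :=
  [exists Vs : {ffun 'I_p -> {set V}}, exists As : {ffun 'I_p -> {set V * V}},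
    [forall i, [&& is_subgraph D (Vs i) (As i), S \subset Vs i & strong_sub (Vs i) (As i)]]
    && [forall i, forall j, (i != j) ==> ((Vs i :&: Vs j == S) && [disjoint As i & As j])]].

(* For #|S| >= 2 every such subgraph has an arc and the arc
   sets are disjoint, so this number is at most #|V|^2; the max below is
   then the true maximum. *)
Definition kappaS (V : finType) (D : rel V) (S : {set V}) : nat :=
  \max_(p < (#|V| ^ 2).+1 | S_packing D S p) p.

Definition kappa_k (V : finType) (D : rel V) (k : nat) : nat :=
  \big[minn/(#|V| ^ 2)]_(S : {set V} | #|S| == k) kappaS D S.

Definition complete_digraph (n : nat) : rel 'I_n := fun u v => u != v.

Definition digraph_iso (V W : finType) (D : rel V) (E : rel W) : Prop :=
  exists f : V -> W, bijective f /\ forall u v, D u v = E (f u) (f v).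

(* Lower bound: D itself is a strong subgraph containing S.  Upper bound: for
   #|S| >= 2, each of the S-internally disjoint strong subgraphs leaves a fixed
   u in S by its own arc, so kappa_S(D) is at most the out-degree of u; the
   directed n-cycle attains 1.
   If kappa_k(D) = n - 1, every vertex has out-degree n - 1, so D is complete,
   and each of the n - 1 subgraphs leaves each u in S by exactly one arc.  At
   most n - k of them contain a vertex outside S, so at least k - 1 live on S,
   where one out-arc per vertex plus strong connectivity makes them Hamiltonian
   cycles: a Hamiltonian decomposition of the complete digraph on k vertices.
   Conversely such a decomposition, together with the double stars joining S to
   each outside vertex, gives n - 1 subgraphs.  Complete digraphs on k vertices
   have Hamiltonian decompositions exactly when k is not 4 or 6: zigzag
   constructions for k = 2, odd k and even k >= 8, exhaustive search for 4 and 6. *)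

From mathcomp Require Import all_boot order zify.
Set Implicit Arguments. Unset Strict Implicit. Unset Printing Implicit Defensive.

Ltac case_ifs := repeat match goal with
 | |- context [if ?b then _ else _] => destruct b eqn:?
 | H : context [if ?b then _ else _] |- _ => destruct b eqn:?
end.

Definition nat_cycle N (g : nat -> nat) :=
  forall x y, x < N -> y < N -> exists m, iter m g x = y.

Definition restrict_ord N (g : nat -> nat) (x : 'I_N) : 'I_N := insubd x (g x).

Section RestrictOrd.
Variables (N : nat) (g : nat -> nat).
Hypothesis g_lt : forall x, x < N -> g x < N.

Lemma restrict_ordE (x : 'I_N) : val (restrict_ord g x) = g x.
Proof. by rewrite /restrict_ord val_insubd g_lt. Qed.

Lemma iter_restrict_ord m (x : 'I_N) : val (iter m (restrict_ord g) x) = iter m g x.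
Proof. by elim: m => //= m IH; rewrite restrict_ordE IH. Qed.

Lemma fconnect_restrict_ord (x y : 'I_N) :
  fconnect (restrict_ord g) x y <-> exists m, iter m g x = y.
Proof.
split=> [/iter_findex e | [m e]].
  by exists (findex (restrict_ord g) x y); rewrite -iter_restrict_ord e.
have -> : y = iter m (restrict_ord g) x by apply: val_inj; rewrite iter_restrict_ord.
exact: fconnect_iter.
Qed.

Lemma nat_cycle_via z :
  (forall x, x < N -> exists m, iter m g x = z) ->
  (forall y, y < N -> exists m, iter m g z = y) -> nat_cycle N g.
Proof.
move=> to_z from_z x y x_lt y_lt; have [m1 e1] := to_z x x_lt; have [m2 e2] := from_z y y_lt.
by exists (m2 + m1); rewrite iterD e1.
Qed.

Lemma nat_cycle_of_inj z : z < N -> {in gtn N &, injective g} ->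
  (forall x, x < N -> exists m, iter m g x = z) -> nat_cycle N g.
Proof.
move=> z_lt g_inj to_z; apply: (nat_cycle_via to_z) => y y_lt.
have inj : injective (@restrict_ord N g).
  move=> a b e; apply: val_inj; apply: g_inj; rewrite ?inE ?ltn_ord //.
  by rewrite -!restrict_ordE e.
apply/(fconnect_restrict_ord (Ordinal z_lt) (Ordinal y_lt)).
by rewrite fconnect_sym //; apply/fconnect_restrict_ord/to_z.
Qed.

End RestrictOrd.

(* A Hamiltonian decomposition of the complete digraph on 0..N-1, with cycles
   t < N-1 given as successor functions on nat so that lia can check them. *)
Definition nat_ham_decomposition N (f : nat -> nat -> nat) :=
  [/\ forall t x, t < N.-1 -> x < N -> f t x < N,
      forall x s t, x < N -> s < N.-1 -> t < N.-1 -> f s x = f t x -> s = t &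
      forall t, t < N.-1 -> nat_cycle N (f t)].

Lemma nat_ham_decomposition2 : nat_ham_decomposition 2 (fun _ x => 1 - x).
Proof.
split=> [t x _|x [|s] [|t] //|t _ x y x_lt y_lt]; first lia.
have [->|x_neq] := eqVneq x y; first by exists 0.
by exists 1 => /=; lia.
Qed.

Definition modsub r x t := if t <= x then x - t else x + 2*r - t.
Definition modadd r y t := if y + t < 2*r then y + t else y + t - 2*r.

(* Vertices 0..2r, with 2r playing infinity and 0..2r-1 read modulo 2r.  Cycle t
   is the rotation by t of  infinity, 0, 1, -1, 2, -2, ..., r, infinity.  Its steps
   1, -2, 3, -4, ... are pairwise distinct modulo 2r, so the 2r rotations are
   arc-disjoint. *)
Definition zigzag r t x :=
  if 2*r <= x then t else
  let y := modsub r x t in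
  if y < 1 then modadd r 1 t else if y < r then modadd r (2*r - y) t
  else if y < r+1 then 2*r else modadd r (2*r - y + 1) t.

Definition zigzag_pos r y := if y < 1 then 0 else if y < r+1 then 2*y - 1 else 2*(2*r - y).
Definition zigzag_togo r t x := if 2*r <= x then 0 else 2*r - zigzag_pos r (modsub r x t).

Section Zigzag.
Variables r t : nat.
Hypotheses (r_gt0 : 0 < r) (t_lt : t < 2*r).

Lemma zigzag_le x : x <= 2*r -> zigzag r t x <= 2*r.
Proof. rewrite /zigzag /modsub /modadd => *; case_ifs; lia. Qed.

Lemma zigzag_inj x y : x <= 2*r -> y <= 2*r -> zigzag r t x = zigzag r t y -> x = y.
Proof. rewrite /zigzag /modsub /modadd => *; case_ifs; lia. Qed.

Lemma zigzag_progress x : x < 2*r ->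
  zigzag r t x = 2*r \/ (zigzag r t x < 2*r /\ zigzag_togo r t (zigzag r t x) < zigzag_togo r t x).
Proof. rewrite /zigzag /zigzag_togo /zigzag_pos /modsub /modadd => *; case_ifs; lia. Qed.

Lemma zigzag_reach_inf x : x <= 2*r -> exists m, iter m (zigzag r t) x = 2*r.
Proof.
have [b] : exists b, zigzag_togo r t x <= b by exists (zigzag_togo r t x).
elim: b x => [|b IH] x togo_x x_le.
  exists 0 => /=; move: togo_x; rewrite /zigzag_togo /zigzag_pos /modsub => *; case_ifs; lia.
have [->|x_neq] := eqVneq x (2*r); first by exists 0.
have x_lt : x < 2*r by lia.
have [zx_inf|[zx_lt togo_lt]] := zigzag_progress x_lt; first by exists 1.
have [|m <-] := IH (zigzag r t x) _ (ltnW zx_lt); first lia.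
by exists m.+1; rewrite iterSr.
Qed.

Lemma zigzag_cycle : nat_cycle (2*r+1) (zigzag r t).
Proof.
apply: (@nat_cycle_of_inj _ _ _ (2*r)) => [x x_lt|||x x_lt].
- by have := zigzag_le (_ : x <= 2*r); lia.
- lia.
- by move=> x y; rewrite !inE => x_lt y_lt; apply: zigzag_inj; lia.
- by apply: zigzag_reach_inf; lia.
Qed.

End Zigzag.

Lemma zigzag_inj_rot r s t x : 0 < r -> s < 2*r -> t < 2*r -> x <= 2*r ->
  zigzag r s x = zigzag r t x -> s = t.
Proof. rewrite /zigzag /modsub /modadd => *; case_ifs; lia. Qed.

Lemma nat_ham_decomposition_odd r : 0 < r -> nat_ham_decomposition (2*r+1) (zigzag r).
Proof.
move=> r_gt0; rewrite /nat_ham_decomposition (_ : (2*r+1).-1 = 2*r); last lia.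
split=> [t x t_lt x_lt|x s t x_lt s_lt t_lt|t t_lt]; last exact: zigzag_cycle.
- by have := zigzag_le r_gt0 t_lt (_ : x <= 2*r); lia.
- by apply: zigzag_inj_rot => //; lia.
Qed.

(* For k = 2r+2, r >= 3: insert the new vertex 2r+1 into the zigzag cycle t right
   after splice_at r t.  The 2r arcs removed in this way, together with
   (2r-3, 2r+1) and (2r+1, 2r), form the last Hamiltonian cycle last_cycle r;
   last_cycle_pos r numbers its vertices in order, starting from 2r. *)
Definition last_cycle r x :=
  if 2*r+1 <= x then 2*r else if 2*r <= x then 0 else
  if x + 3 < r then x+2 else if x + 2 < r then r+1 else if x + 1 < r then r-1
  else if x < r then r else if x + 3 < 2*r then x+2 else if x + 2 < 2*r then 2*r+1
  else if x + 1 < 2*r then 2*r-1 else 1.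

Definition last_cycle_pos r x :=
  if 2*r+1 <= x then 2*r+1 else if 2*r <= x then 0 else
  if ~~ odd r then
    (if ~~ odd x then (if x < r then x./2 + 1 else x./2 + 2)
     else if x + 1 < r then r + 3 + x./2 else if x < r then r./2 + 1
     else if x + 1 < 2*r then r + 2 + x./2 else r + 2)
  else
    (if ~~ odd x then (if x + 1 < r then x./2 + 1 else if x < r then 3 * r./2 + 2 else x./2)
     else if x < r then r + 1 + x./2 else if x + 1 < 2*r then r + 2 + x./2 else r).

Definition splice_at r t :=
  if t < 1 then 2*r else if t + 2 < r then t + r - 1
  else if t + 1 < r then r-2 else if t < r then r-1 else if t < r+1 then 2*r-1
  else if t + 2 < 2*r then t - r - 1 else if t + 1 < 2*r then 2*r-2 else r-3.

Definition splice_index r x :=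
  if x + 3 < r then x + r + 1 else if x + 2 < r then 2*r-1
  else if x + 1 < r then r-2 else if x < r then r-1 else if x + 3 < 2*r then x + 1 - r
  else if x + 2 < 2*r then 0 else if x + 1 < 2*r then 2*r-2 else if x < 2*r then r else 0.

Definition spliced r t x :=
  if t == 2*r then last_cycle r x
  else if x == 2*r+1 then zigzag r t (splice_at r t)
  else if x == splice_at r t then 2*r+1 else zigzag r t x.

Section SpliceArith.
Variable r : nat.
Hypothesis r_gt2 : 2 < r.

Lemma zigzag_splice_at t : t < 2*r -> zigzag r t (splice_at r t) = last_cycle r (splice_at r t).
Proof. rewrite /zigzag /splice_at /last_cycle /modsub /modadd => *; case_ifs; lia. Qed.

Lemma splice_at_inj s t : s < 2*r -> t < 2*r -> splice_at r s = splice_at r t -> s = t.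
Proof. rewrite /splice_at => *; case_ifs; lia. Qed.

Lemma splice_at_le t : t < 2*r -> splice_at r t <= 2*r.
Proof. rewrite /splice_at => *; case_ifs; lia. Qed.

Lemma splice_at_neq t : t < 2*r -> splice_at r t != 2*r-3.
Proof. rewrite /splice_at => *; case_ifs; lia. Qed.

Lemma splice_index_lt x : x <= 2*r -> splice_index r x < 2*r.
Proof. rewrite /splice_index => *; case_ifs; lia. Qed.

Lemma splice_indexK x : x <= 2*r -> x != 2*r-3 -> splice_at r (splice_index r x) = x.
Proof. rewrite /splice_at /splice_index => *; case_ifs; lia. Qed.

Lemma last_cycle_le x : x <= 2*r+1 -> last_cycle r x <= 2*r+1.
Proof. rewrite /last_cycle => *; case_ifs; lia. Qed.

Lemma last_cycle_inj x y : x <= 2*r+1 -> y <= 2*r+1 -> last_cycle r x = last_cycle r y -> x = y.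
Proof. rewrite /last_cycle => *; case_ifs; lia. Qed.

Lemma last_cycle_to_new : last_cycle r (2*r-3) = 2*r+1.
Proof. rewrite /last_cycle; case_ifs; lia. Qed.

Lemma last_cycle_pos_le x : x <= 2*r+1 -> last_cycle_pos r x <= 2*r+1.
Proof. rewrite /last_cycle_pos => *; case_ifs; lia. Qed.

Lemma last_cycle_pos_succ x :
  x <= 2*r -> last_cycle_pos r (last_cycle r x) = (last_cycle_pos r x).+1.
Proof. rewrite /last_cycle /last_cycle_pos => *; case_ifs; lia. Qed.

End SpliceArith.

Section Spliced.
Variable r : nat.
Hypothesis r_gt2 : 2 < r.
Let r_gt0 : 0 < r. Proof. lia. Qed.

Lemma last_cycle_reach_new x : x <= 2*r+1 -> exists m, iter m (last_cycle r) x = 2*r+1.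
Proof.
have [b] : exists b, 2*r+1 - last_cycle_pos r x <= b by exists (2*r+1 - last_cycle_pos r x).
elim: b x => [|b IH] x pos_x x_le.
  by exists 0 => /=; move: pos_x; rewrite /last_cycle_pos => *; case_ifs; lia.
have [->|x_neq] := eqVneq x (2*r+1); first by exists 0.
have {x_neq} x_le' : x <= 2*r by lia.
have gx_le := last_cycle_le r_gt2 x_le.
have pos_succ := last_cycle_pos_succ r_gt2 x_le'; have pos_le := last_cycle_pos_le r_gt2 gx_le.
have [m <-] : exists m, iter m (last_cycle r) (last_cycle r x) = 2*r+1 by apply: IH; lia.
by exists m.+1; rewrite iterSr.
Qed.

Lemma last_cycle_cycle : nat_cycle (2*r+2) (last_cycle r).
Proof.
apply: (@nat_cycle_of_inj _ _ _ (2*r+1)) => [x x_lt|||x x_lt].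
- by have := last_cycle_le r_gt2 (_ : x <= 2*r+1); lia.
- lia.
- by move=> x y; rewrite !inE => x_lt y_lt; apply: last_cycle_inj => //; lia.
- by apply: last_cycle_reach_new; lia.
Qed.

Lemma splicedE t x : t < 2*r -> spliced r t x =
  if x == 2*r+1 then zigzag r t (splice_at r t)
  else if x == splice_at r t then 2*r+1 else zigzag r t x.
Proof. by move=> t_lt; rewrite /spliced ifF //; apply/eqP; lia. Qed.

Lemma spliced_last : spliced r (2*r) =1 last_cycle r.
Proof. by move=> x; rewrite /spliced eqxx. Qed.

Lemma spliced_lt t x : t < 2*r+1 -> x < 2*r+2 -> spliced r t x < 2*r+2.
Proof.
move=> t_lt x_lt; have [->|t_neq] := eqVneq t (2*r).
  by rewrite spliced_last; have := last_cycle_le r_gt2 (_ : x <= 2*r+1); lia.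
have {}t_lt : t < 2*r by lia.
have := splice_at_le r_gt2 t_lt; rewrite splicedE //.
case: eqP => [_|x_neq] sp_le; first by have := zigzag_le r_gt0 t_lt sp_le; lia.
by case: eqP => [|_]; [lia | have := zigzag_le r_gt0 t_lt (_ : x <= 2*r); lia].
Qed.

Section SplicedCycle.
Variable t : nat.
Hypothesis t_lt : t < 2*r.

Lemma spliced_zigzag x : x <= 2*r -> x != splice_at r t -> spliced r t x = zigzag r t x.
Proof. by move=> x_le x_neq; rewrite splicedE // ifF ?(negbTE x_neq) //; apply/eqP; lia. Qed.

Lemma spliced_detour : spliced r t (2*r+1) = zigzag r t (splice_at r t).
Proof. by rewrite splicedE // eqxx. Qed.

Lemma spliced_splice_at : spliced r t (splice_at r t) = 2*r+1.
Proof. by rewrite splicedE // eqxx ifF //; apply/eqP; have := splice_at_le r_gt2 t_lt; lia. Qed.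

Lemma iter_zigzag_spliced m x : x <= 2*r ->
  exists m', iter m' (spliced r t) x = iter m (zigzag r t) x.
Proof.
elim: m x => [|m IH] x x_le; first by exists 0.
have [m' e] := IH _ (zigzag_le r_gt0 t_lt x_le).
have [x_eq|x_neq] := eqVneq x (splice_at r t).
  by exists m'.+2; rewrite !iterSr x_eq spliced_splice_at spliced_detour -x_eq e.
by exists m'.+1; rewrite !iterSr spliced_zigzag.
Qed.

Lemma spliced_cycle : nat_cycle (2*r+2) (spliced r t).
Proof.
have sp_le := splice_at_le r_gt2 t_lt.
apply: (@nat_cycle_via _ _ (2*r+1)) => [x x_lt|y y_lt].
  have [->|x_neq] := eqVneq x (2*r+1); first by exists 0.
  have [m e] : exists m, iter m (zigzag r t) x = splice_at r t.
    by apply: zigzag_cycle => //; lia.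
  have [m' e'] : exists m', iter m' (spliced r t) x = iter m (zigzag r t) x.
    by apply: iter_zigzag_spliced; lia.
  by exists m'.+1; rewrite iterS e' e spliced_splice_at.
have [->|y_neq] := eqVneq y (2*r+1); first by exists 0.
have zs_le := zigzag_le r_gt0 t_lt sp_le.
have [m e] : exists m, iter m (zigzag r t) (zigzag r t (splice_at r t)) = y.
  by apply: zigzag_cycle => //; lia.
have [m' e'] := iter_zigzag_spliced m zs_le.
by exists m'.+1; rewrite iterSr spliced_detour e' e.
Qed.

End SplicedCycle.

Lemma spliced_neq_last s x : s < 2*r -> x < 2*r+2 -> spliced r s x != last_cycle r x.
Proof.
move=> s_lt x_lt; have sp_le := splice_at_le r_gt2 s_lt.
have [->|x_neq] := eqVneq x (2*r+1).
  rewrite spliced_detour // zigzag_splice_at //; apply/eqP => /(last_cycle_inj r_gt2); lia.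
have [->|x_neq_sp] := eqVneq x (splice_at r s).
  rewrite spliced_splice_at // -(last_cycle_to_new r_gt2); apply/eqP => /(last_cycle_inj r_gt2).
  by have := splice_at_neq r_gt2 s_lt; lia.
have x_le : x <= 2*r by lia.
rewrite spliced_zigzag //; have [->|x_neq3] := eqVneq x (2*r-3).
  by rewrite (last_cycle_to_new r_gt2); have := zigzag_le r_gt0 s_lt (_ : 2*r-3 <= 2*r); lia.
have t_lt := splice_index_lt r_gt2 x_le; have t_spl := splice_indexK r_gt2 x_le x_neq3.
rewrite -{2}t_spl -zigzag_splice_at // t_spl.
apply/eqP => /(zigzag_inj_rot r_gt0 s_lt t_lt x_le) s_eq.
by rewrite s_eq t_spl eqxx in x_neq_sp.
Qed.

Lemma spliced_inj_rot_lt x s t : x < 2*r+2 -> s < 2*r -> t < 2*r ->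
  spliced r s x = spliced r t x -> s = t.
Proof.
move=> x_lt s_lt t_lt; have s_le := splice_at_le r_gt2 s_lt; have t_le := splice_at_le r_gt2 t_lt.
have [->|x_neq] := eqVneq x (2*r+1).
  rewrite (spliced_detour s_lt) (spliced_detour t_lt).
  rewrite (zigzag_splice_at r_gt2 s_lt) (zigzag_splice_at r_gt2 t_lt) => /(last_cycle_inj r_gt2) e.
  by apply: (splice_at_inj r_gt2) => //; apply: e; lia.
have x_le : x <= 2*r by lia.
have [x_s|x_neq_s] := eqVneq x (splice_at r s); have [x_t|x_neq_t] := eqVneq x (splice_at r t).
- by move=> _; apply: (splice_at_inj r_gt2); rewrite // -x_s -x_t.
- rewrite {1}x_s spliced_splice_at // spliced_zigzag //.
  by have := zigzag_le r_gt0 t_lt x_le; lia.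
- rewrite {2}x_t spliced_splice_at // spliced_zigzag //.
  by have := zigzag_le r_gt0 s_lt x_le; lia.
- by rewrite !spliced_zigzag //; apply: zigzag_inj_rot.
Qed.

Lemma nat_ham_decomposition_even : nat_ham_decomposition (2*r+2) (spliced r).
Proof.
rewrite /nat_ham_decomposition (_ : (2*r+2).-1 = 2*r+1); last lia.
split=> [t x t_lt x_lt|x s t x_lt s_lt t_lt|t t_lt]; first exact: spliced_lt.
  have [s_eq|s_neq] := eqVneq s (2*r); have [t_eq|t_neq] := eqVneq t (2*r).
  - by rewrite s_eq t_eq.
  - rewrite s_eq spliced_last => e.
    by have := spliced_neq_last (_ : t < 2*r) x_lt; rewrite e eqxx; lia.
  - rewrite t_eq spliced_last => e.
    by have := spliced_neq_last (_ : s < 2*r) x_lt; rewrite e eqxx; lia.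
  - by apply: spliced_inj_rot_lt => //; lia.
have [->|t_neq] := eqVneq t (2*r); last by apply: spliced_cycle; lia.
move=> x y x_lt y_lt; have [m e] := last_cycle_cycle x_lt y_lt.
by exists m; rewrite (eq_iter spliced_last).
Qed.

End Spliced.

Definition ham_decomposition k (s : nat -> 'I_k -> 'I_k) :=
  (forall j, j < k.-1 -> forall x y, fconnect (s j) x y) /\
  (forall x i j, i < k.-1 -> j < k.-1 -> s i x = s j x -> i = j).
Arguments ham_decomposition : clear implicits.

Lemma ham_decomposition_neq k s j x : 1 < k -> ham_decomposition k s -> j < k.-1 -> s j x != x.
Proof.
move=> k_gt1 [cyc _] j_lt; apply/eqP => sx_eq.
have all_x y : y = x by rewrite -(iter_findex (cyc j j_lt x y)) iter_fix.
by have := congr1 val (etrans (all_x (Ordinal k_gt1)) (esym (all_x (Ordinal (ltnW k_gt1))))).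
Qed.

Lemma nat_ham_decompositionP k f : nat_ham_decomposition k f ->
  ham_decomposition k (fun j => restrict_ord (f j)).
Proof.
case=> f_lt f_inj f_cyc; split=> [j j_lt x y | x i j i_lt j_lt].
  by apply/fconnect_restrict_ord => [z|]; [apply: f_lt | apply: f_cyc].
move=> /(congr1 val); rewrite !restrict_ordE => [|z|z]; [exact: f_inj | exact: f_lt ..].
Qed.

Lemma ham_decomposition_exists k : 1 < k -> k != 4 -> k != 6 -> exists s, ham_decomposition k s.
Proof.
move=> k_gt1 k_neq4 k_neq6; have [k_eq2|k_neq2] := eqVneq k 2.
  by rewrite k_eq2; eexists; apply/nat_ham_decompositionP/nat_ham_decomposition2.
have [k_odd|k_even] := boolP (odd k).
  rewrite (_ : k = 2 * k./2 + 1); last lia.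
  by eexists; apply/nat_ham_decompositionP/nat_ham_decomposition_odd; lia.
rewrite (_ : k = 2 * (k./2 - 1) + 2); last lia.
by eexists; apply/nat_ham_decompositionP/nat_ham_decomposition_even; lia.
Qed.

(* A decomposition on k vertices yields k - 1 successor tables that are cyclic
   permutations and pairwise differ everywhere; none exist for k = 4, 6. *)
Fixpoint tuples_below n m : seq (seq nat) :=
  if m is m'.+1 then [seq x :: l | x <- iota 0 n, l <- tuples_below n m'] else [:: [::]].

Definition is_cyclic_perm k (l : seq nat) := uniq l && uniq (traject (nth 0 l) 0 k).

Definition cyclic_perms k := filter (is_cyclic_perm k) (tuples_below k k).

Definition arc_disjoint k (l1 l2 : seq nat) := all (fun x => nth 0 l1 x != nth 0 l2 x) (iota 0 k).

Fixpoint has_arc_disjoint k d (cands : seq (seq nat)) : bool :=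
  if d is d'.+1 then has (fun c => has_arc_disjoint k d' (filter (arc_disjoint k c) cands)) cands
  else true.

Lemma mem_tuples_below n m l : size l = m -> all (gtn n) l -> l \in tuples_below n m.
Proof.
elim: m l => [|m IH] [|x l] //= [l_size] /andP [x_lt l_lt].
by apply: (allpairs_f (fun x l => x :: l)); [rewrite mem_iota | exact: IH].
Qed.

Lemma has_arc_disjointP k d cands (L : nat -> seq nat) :
  (forall j, j < d -> L j \in cands) ->
  (forall i j, i < d -> j < d -> i != j -> arc_disjoint k (L i) (L j)) ->
  has_arc_disjoint k d cands.
Proof.
elim: d cands L => [|d IH] cands L //= L_in L_disj.
apply/hasP; exists (L 0); first exact: L_in.
apply: (IH _ (fun j => L j.+1)) => [j j_lt | i j i_lt j_lt ij].
  by rewrite mem_filter L_in // andbT; apply: L_disj.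
exact: L_disj.
Qed.

Lemma fconnect_total_inj (T : finType) (f : T -> T) : (forall x y, fconnect f x y) -> injective f.
Proof.
move=> f_conn a b e.
have /injectivePcycle f_inj : fcycle f (orbit f a) by rewrite -fconnect_f f_conn.
by apply: f_inj => //; rewrite -fconnect_orbit f_conn.
Qed.

Lemma fconnect_total_order (T : finType) (f : T -> T) x :
  (forall x y, fconnect f x y) -> order f x = #|T|.
Proof. by move=> f_conn; apply: eq_card => y; rewrite inE f_conn. Qed.

Section SuccessorTable.
Variables (k : nat) (s : nat -> 'I_k.+1 -> 'I_k.+1).

Definition succ_table j := [seq val (s j x) | x <- enum 'I_k.+1].

Lemma nth_succ_table j (x : 'I_k.+1) : nth 0 (succ_table j) x = s j x.
Proof.
rewrite (nth_map x) ?size_enum_ord //; congr (val (s j _)).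
by apply: val_inj; rewrite /= nth_enum_ord.
Qed.

Lemma traject_succ_table j m (x : 'I_k.+1) :
  traject (nth 0 (succ_table j)) x m = map val (traject (s j) x m).
Proof. by elim: m x => //= m IH x; rewrite nth_succ_table IH. Qed.

Lemma succ_table_cyclic j : (forall x y, fconnect (s j) x y) -> succ_table j \in cyclic_perms k.+1.
Proof.
move=> s_conn; rewrite mem_filter; apply/andP; split; last first.
  apply: mem_tuples_below; first by rewrite size_map size_enum_ord.
  by apply/allP => _ /mapP [x _ ->]; exact: ltn_ord.
rewrite /is_cyclic_perm map_inj_uniq ?enum_uniq; last first.
  exact: inj_comp val_inj (fconnect_total_inj s_conn).
rewrite (traject_succ_table j k.+1 ord0) map_inj_uniq; last exact: val_inj.
by have := orbit_uniq (s j) ord0; rewrite /orbit fconnect_total_order // card_ord.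
Qed.

End SuccessorTable.

Lemma ham_decomposition_search k s :
  ham_decomposition k s -> has_arc_disjoint k k.-1 (cyclic_perms k).
Proof.
case: k s => [//|k] s [s_cyc s_disj].
apply: (@has_arc_disjointP _ _ _ (succ_table s)) => [j j_lt|i j i_lt j_lt ij].
  exact: succ_table_cyclic (s_cyc j j_lt).
apply/allP => x; rewrite mem_iota add0n => /andP [_ x_lt].
rewrite -[x]/(val (Ordinal x_lt)) !nth_succ_table; apply/eqP => /val_inj e.
by rewrite (s_disj _ _ _ i_lt j_lt e) eqxx in ij.
Qed.

Lemma no_ham_decomposition4 s : ~ ham_decomposition 4 s.
Proof. by move/ham_decomposition_search; vm_compute. Qed.

Lemma no_ham_decomposition6 s : ~ ham_decomposition 6 s.
Proof. by move/ham_decomposition_search; vm_compute. Qed.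

Lemma exists_subset_card (T : finType) (A : {set T}) m :
  m <= #|A| -> exists2 B : {set T}, B \subset A & #|B| = m.
Proof.
case/card_geqP=> s [s_uniq s_size s_sub]; exists [set x in s].
  by apply/subsetP=> x; rewrite inE; exact: s_sub.
by rewrite cardsE (card_uniqP s_uniq).
Qed.

Lemma exists_other (T : finType) (A : {set T}) u : 1 < #|A| -> exists2 v, v \in A & v != u.
Proof.
move=> A_gt1; have : 0 < #|A :\ u| by have := cardsD1 u A; case: (u \in A) => /=; lia.
by case/card_gt0P=> v; rewrite !inE => /andP [vu vA]; exists v.
Qed.

Lemma disjointP (T : finType) (A B : {pred T}) :
  reflect (forall x, x \in A -> x \in B -> False) [disjoint A & B].
Proof.
apply: (iffP pred0P) => [AB0 x xA xB | AB0 x] /=; first by have := AB0 x; rewrite /= xA xB.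
by apply/negbTE/negP => /andP [/AB0].
Qed.

Section Packing.
Variables (V : finType) (D : rel V) (S : {set V}).

Definition packing (I : finType) (Vs : I -> {set V}) (As : I -> {set V * V}) :=
  (forall i, [/\ is_subgraph D (Vs i) (As i), S \subset Vs i & strong_sub (Vs i) (As i)]) /\
  (forall i j, i != j -> Vs i :&: Vs j = S /\ [disjoint As i & As j]).

Lemma S_packingP p : reflect (exists Vs As, @packing 'I_p Vs As) (S_packing D S p).
Proof.
apply: (iffP idP) => [/existsP [Vs /existsP [As /andP [/forallP sub /forallP disj]]]|].
  exists Vs, As; split=> [i|i j ij]; first by case/and3P: (sub i).
  by move/forallP: (disj i) => /(_ j) /implyP /(_ ij) /andP [/eqP].
case=> Vs [As [sub disj]]; apply/existsP; exists [ffun i => Vs i].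
apply/existsP; exists [ffun i => As i]; apply/andP; split; apply/forallP => i.
  by rewrite !ffunE; case: (sub i) => *; apply/and3P.
apply/forallP => j; apply/implyP => ij; rewrite !ffunE.
by case: (disj i j ij) => -> ->; rewrite eqxx.
Qed.

Lemma packing_card (I : finType) Vs As : @packing I Vs As -> S_packing D S #|I|.
Proof.
case=> sub disj; apply/S_packingP; exists (Vs \o enum_val), (As \o enum_val).
by split=> [i|i j ij]; [exact: sub | apply: disj; rewrite (inj_eq enum_val_inj)].
Qed.

Lemma S_packing1 : strong D -> S_packing D S 1.
Proof.
move=> D_strong; apply/S_packingP; exists (fun=> setT), (fun=> [set a | D a.1 a.2]).
split=> [i|i j]; last by rewrite !ord1 eqxx.
split; [|exact: subsetT|].
- by apply/forall_inP => a; rewrite !inE => ->.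
- apply/forall_inP => u _; apply/forall_inP => v _.
  by rewrite (@eq_connect _ _ D) // => x y; rewrite /= inE.
Qed.

Lemma subgraphP Vs As a b :
  is_subgraph D Vs As -> (a, b) \in As -> [/\ D a b, a \in Vs & b \in Vs].
Proof. by move/forall_inP => sub /sub /and3P. Qed.

Lemma strong_subP (Vs : {set V}) As a b : strong_sub Vs As -> a \in Vs -> b \in Vs ->
  connect [rel x y | (x, y) \in As] a b.
Proof. by move/forall_inP => conn /conn /forall_inP conn_a /conn_a. Qed.

Lemma strong_sub_hub (Vs : {set V}) (As : {set V * V}) w :
  (forall u, u \in Vs -> connect [rel x y | (x, y) \in As] u w) ->
  (forall v, v \in Vs -> connect [rel x y | (x, y) \in As] w v) -> strong_sub Vs As.
Proof.
move=> to_w from_w; apply/forall_inP => u uV; apply/forall_inP => v vV.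
exact: connect_trans (to_w u uV) (from_w v vV).
Qed.

(* Distinct subgraphs not contained in S have distinct vertices outside S. *)
Lemma packing_card_internal (I : finType) Vs As :
  @packing I Vs As -> #|I| <= #|[set i | Vs i \subset S]| + #|~: S|.
Proof.
case=> _ disj; pose Ext := ~: [set i | Vs i \subset S].
have [i0 i0_ext|no_ext] := pickP (mem Ext); last first.
  by rewrite -(cardsC [set i | Vs i \subset S]) (eq_card0 no_ext) addn0 leq_addr.
have /subsetPn [v0 _ _] : ~~ (Vs i0 \subset S) by move: i0_ext; rewrite !inE.
pose out i := odflt v0 [pick v | v \in Vs i :\: S].
have outP i : i \in Ext -> out i \in Vs i :\: S.
  move=> i_ext; have /subsetPn [v vV vS] : ~~ (Vs i \subset S) by move: i_ext; rewrite !inE.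
  rewrite /out; case: pickP => [//|/(_ v)].
  by rewrite !inE vS vV.
have out_inj : {in Ext &, injective out}.
  move=> i j /outP + /outP + e; rewrite -e !inE => /andP [iS iV] /andP [_ jV].
  apply/eqP; apply: contraT => /disj [VsIJ _].
  by move: iS; rewrite -VsIJ !inE iV jV.
rewrite -(cardsC [set i | Vs i \subset S]) leq_add2l -(card_in_imset out_inj).
by apply/subset_leq_card/subsetP => _ /imsetP [i /outP + ->]; rewrite !inE => /andP [].
Qed.

Definition out_nb (As : {set V * V}) u := odflt u [pick w | (u, w) \in As].

Variables (I : finType) (Vs : I -> {set V}) (As : I -> {set V * V}).
Hypotheses (pack : packing Vs As) (S_gt1 : 1 < #|S|).

Lemma packing_out_nb i u : u \in S -> (u, out_nb (As i) u) \in As i.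
Proof.
move=> uS; have [v vS vu] := exists_other u S_gt1; have [sub S_sub conn] := pack.1 i.
have := strong_subP conn (subsetP S_sub u uS) (subsetP S_sub v vS).
case/connectP => [[|w p] /= path_uv v_last].
  by rewrite v_last eqxx in vu.
rewrite /out_nb; case: pickP => [//|no_out].
by case/andP: path_uv; rewrite no_out.
Qed.

Lemma out_nb_inj u : u \in S -> injective (fun i => out_nb (As i) u).
Proof.
move=> uS i j e; apply/eqP; apply: contraT => ij.
have /disjoint_setI0 /setP /(_ (u, out_nb (As i) u)) := (pack.2 i j ij).2.
by rewrite !inE packing_out_nb // e packing_out_nb.
Qed.

Lemma packing_le_outdeg u : u \in S -> #|I| <= #|[set w | D u w]|.
Proof.
move=> uS; rewrite -(card_imset _ (out_nb_inj uS)).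
apply/subset_leq_card/subsetP => _ /imsetP [i _ ->].
have [sub _ _] := pack.1 i; rewrite inE; by case: (subgraphP sub (packing_out_nb i uS)).
Qed.

End Packing.

Section Kappa.
Variables (V : finType) (D : rel V).

Lemma leq_kappaS (S : {set V}) p : S_packing D S p -> p <= #|V| ^ 2 -> p <= kappaS D S.
Proof.
move=> pack p_le; rewrite -ltnS in p_le.
exact: (@leq_bigmax_cond _ _ (fun i : 'I_(#|V| ^ 2).+1 => val i) (Ordinal p_le)).
Qed.

Lemma kappaS_leq (S : {set V}) b : (forall p, S_packing D S p -> p <= b) -> kappaS D S <= b.
Proof. by move=> pack_le; apply/bigmax_leqP => p; apply: pack_le. Qed.

Lemma S_packing_kappaS (S : {set V}) : S_packing D S (kappaS D S).
Proof.
apply: (big_ind (S_packing D S)) => [|p q|//]; last by rewrite /maxn; case: ifP.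
by apply/S_packingP; exists (fun=> set0), (fun=> set0); split=> -[].
Qed.

Lemma kappaS_le_outdeg (S : {set V}) u : 1 < #|S| -> u \in S -> kappaS D S <= #|[set w | D u w]|.
Proof.
move=> S_gt1 uS; apply: kappaS_leq => p /S_packingP [Vs [As pack]].
by rewrite -[p]card_ord; apply: packing_le_outdeg pack S_gt1 _ uS.
Qed.

Lemma kappa_k_le k (S : {set V}) : #|S| = k -> kappa_k D k <= kappaS D S.
Proof.
by move=> S_card; rewrite /kappa_k -minEnat -leEnat Order.TotalTheory.bigmin_le_cond ?S_card.
Qed.

Lemma kappa_k_ge k b : b <= #|V| ^ 2 ->
  (forall S : {set V}, #|S| = k -> b <= kappaS D S) -> b <= kappa_k D k.
Proof.
move=> b_le b_kappaS; apply: (big_ind (leq b)) => // [p q|S /eqP]; last exact: b_kappaS.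
by rewrite leq_min => -> ->.
Qed.

Lemma kappa_k_gt0 k : strong D -> 0 < #|V| -> 0 < kappa_k D k.
Proof.
move=> D_strong V_gt0; apply: kappa_k_ge => [|S _]; first by rewrite expn_gt0 V_gt0.
by apply: leq_kappaS (S_packing1 S D_strong) _; rewrite expn_gt0 V_gt0.
Qed.

Lemma kappa_k_le_outdeg k u : 1 < k <= #|V| -> kappa_k D k <= #|[set w | D u w]|.
Proof.
case/andP=> k_gt1 k_le.
have [B B_sub B_card] : exists2 B : {set V}, B \subset [set~ u] & #|B| = k.-1.
  by apply: exists_subset_card; rewrite cardsC1; lia.
have uB : u \notin B by apply: contraTN isT => /(subsetP B_sub); rewrite !inE eqxx.
have S_card : #|u |: B| = k by rewrite cardsU1 uB B_card; lia.
apply: leq_trans (kappa_k_le S_card) (kappaS_le_outdeg _ (setU11 u B)); lia.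
Qed.

Lemma outdeg_irreflexive u : irreflexive D -> #|[set w | D u w]| <= #|V| - 1.
Proof.
move=> D_irr; have /subset_leq_card : [set w | D u w] \subset [set~ u].
  by apply/subsetP => w; rewrite !inE; apply: contraTneq => ->; rewrite D_irr.
by rewrite cardsC1 subn1.
Qed.

End Kappa.

Section EnumTransport.
Variables (V : finType) (S : {set V}) (x0 : V) (x0S : x0 \in S) (f : V -> V).
Hypotheses (f_in : {in S, forall u, f u \in S}) (f_conn : {in S &, forall u v, fconnect f u v}).

Lemma iter_enum_rank_in m x :
  iter m (fun x => enum_rank_in x0S (f (enum_val x))) x = enum_rank_in x0S (iter m f (enum_val x)).
Proof.
elim: m => [|m IH] /=; first by rewrite enum_valK_in.
have fm_in : iter m f (enum_val x) \in S.
  by elim: m {IH} => [|m IH] /=; [exact: enum_valP | exact: f_in].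
by rewrite IH enum_rankK_in.
Qed.

Lemma fconnect_enum_rank_in x y : fconnect (fun x => enum_rank_in x0S (f (enum_val x))) x y.
Proof.
have /iter_findex e := f_conn (enum_valP x) (enum_valP y).
by rewrite -(enum_valK_in x0S y) -e -iter_enum_rank_in fconnect_iter.
Qed.

End EnumTransport.

Section CompleteDigraph.
Variables (V : finType) (D : rel V) (S : {set V}).
Hypothesis D_complete : forall u v, D u v = (u != v).
Hypothesis S_gt1 : 1 < #|S|.

Section Construction.
Variable s : nat -> 'I_#|S| -> 'I_#|S|.
Hypothesis s_ham : ham_decomposition #|S| s.

Definition cycle_arcs j := [set (enum_val x, enum_val (s j x)) | x : 'I_#|S|].
Definition star_arcs w := [set (a, w) | a in S] :|: [set (w, a) | a in S].

Lemma cycle_arcsP j a b : (a, b) \in cycle_arcs j -> a \in S /\ b \in S.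
Proof. by case/imsetP => x _ [-> ->]; rewrite !enum_valP. Qed.

Lemma star_arcsP w a b : (a, b) \in star_arcs w -> (a \in S) && (b == w) || (a == w) && (b \in S).
Proof. by rewrite inE => /orP [] /imsetP [c cS [-> ->]]; rewrite cS eqxx ?orbT. Qed.

Lemma cycle_subgraph j : j < #|S|.-1 ->
  [/\ is_subgraph D S (cycle_arcs j), S \subset S & strong_sub S (cycle_arcs j)].
Proof.
move=> j_lt; have [s_cyc _] := s_ham; split=> //.
  apply/forall_inP => -[a b] /imsetP [x _ [-> ->]] /=.
  rewrite D_complete !enum_valP !andbT (inj_eq enum_val_inj) eq_sym.
  exact: ham_decomposition_neq.
have [x0 x0S] : exists x0, x0 \in S by apply/set0Pn; rewrite -card_gt0; lia.
apply/forall_inP => u uS; apply/forall_inP => v vS.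
rewrite -(enum_rankK_in x0S uS) -(enum_rankK_in x0S vS).
have /iter_findex <- := s_cyc j j_lt (enum_rank_in x0S u) (enum_rank_in x0S v).
elim: (findex _ _ _) => [|m IH] /=; first exact: connect0.
apply: connect_trans IH (connect1 _); exact: imset_f.
Qed.

Lemma star_subgraph w : w \notin S ->
  [/\ is_subgraph D (w |: S) (star_arcs w), S \subset w |: S & strong_sub (w |: S) (star_arcs w)].
Proof.
move=> wS; have neq_w c : c \in S -> c != w by move=> cS; apply: contraNneq wS => <-.
split; [|exact: subsetUr|].
  apply/forall_inP => -[a b]; rewrite !inE => /orP [] /imsetP [c cS [-> ->]] /=;
    by rewrite D_complete cS eqxx ?orbT andbT ?neq_w // eq_sym neq_w.
apply: (strong_sub_hub (w := w)) => u; rewrite !inE => /predU1P [->|uS].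
- exact: connect0.
- by apply: connect1; rewrite /= !inE imset_f.
- exact: connect0.
- by apply: connect1; rewrite /= !inE imset_f ?orbT.
Qed.

Lemma cycle_arcs_disjoint i j : i < #|S|.-1 -> j < #|S|.-1 -> i != j ->
  [disjoint cycle_arcs i & cycle_arcs j].
Proof.
move=> i_lt j_lt ij; apply/disjointP => _ /imsetP [x _ ->] /imsetP [y _ [/enum_val_inj <-]].
by move=> /enum_val_inj /(s_ham.2 x i j i_lt j_lt) e; rewrite e eqxx in ij.
Qed.

Lemma cycle_star_disjoint j w : w \notin S -> [disjoint cycle_arcs j & star_arcs w].
Proof.
move=> wS; apply/disjointP => -[a b] /cycle_arcsP [aS bS] /star_arcsP.
by case/orP => /andP [] // => [_ /eqP e|/eqP e _]; rewrite -e ?aS ?bS in wS.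
Qed.

Lemma star_arcs_disjoint w w' : w \notin S -> w != w' -> [disjoint star_arcs w & star_arcs w'].
Proof.
move=> wS ww'; apply/disjointP => -[a b].
move=> /star_arcsP /orP [/andP [_ /eqP ->] | /andP [/eqP -> _]] /star_arcsP /orP [] /andP [].
all: by rewrite ?(negbTE wS) ?(negbTE ww') ?andbF.
Qed.

Definition cycle_star_vertices (i : 'I_#|S|.-1 + {w | w \notin S}) :=
  if i is inr w then val w |: S else S.

Definition cycle_star_arcs (i : 'I_#|S|.-1 + {w | w \notin S}) :=
  match i with inl j => cycle_arcs j | inr w => star_arcs (val w) end.

Lemma cycle_star_packing : packing D S cycle_star_vertices cycle_star_arcs.
Proof.
split=> [[j|[w wS]] | [i|[w wS]] [j|[w' w'S]] ij] /=.
- exact: cycle_subgraph.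
- exact: star_subgraph.
- by rewrite setIid cycle_arcs_disjoint.
- by rewrite (setIidPl (subsetUr _ _)) cycle_star_disjoint.
- by rewrite (setIidPr (subsetUr _ _)) disjoint_sym cycle_star_disjoint.
have ww' : w != w'.
  by apply: contraNneq ij => e; subst w'; rewrite (bool_irrelevance wS w'S).
rewrite star_arcs_disjoint // -setUIl (_ : [set w] :&: [set w'] = set0) ?set0U //.
by apply/setP => x; rewrite !inE; apply: contraNF ww' => /andP [/eqP <- /eqP <-].
Qed.

Lemma ham_decomposition_packing : S_packing D S (#|V| - 1).
Proof.
have := packing_card cycle_star_packing; rewrite card_sum card_sig card_ord.
have -> : #|[pred w | w \notin S]| = #|~: S| by apply: eq_card => w; rewrite !inE.
by rewrite (_ : _ + _ = #|V| - 1) //; have := cardsC S; lia.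
Qed.

End Construction.

Section Recovery.
Variables (I : finType) (Vs : I -> {set V}) (As : I -> {set V * V}).
Hypotheses (pack : packing D S Vs As) (I_card : #|I| = #|V| - 1).

(* The n - 1 subgraphs leave u by pairwise distinct arcs, hence by all of them. *)
Lemma packing_out_nb_unique i u w : u \in S -> (u, w) \in As i -> w = out_nb (As i) u.
Proof.
move=> uS uw; have arc_neq j a b : (a, b) \in As j -> b \in [set~ a].
  by have [sub _ _] := pack.1 j => /(subgraphP sub) [+ _ _]; rewrite D_complete !inE eq_sym.
have out_onto : [set out_nb (As j) u | j in I] = [set~ u].
  apply/eqP; rewrite eqEcard (card_imset _ (out_nb_inj pack S_gt1 uS)).
  rewrite cardsC1 I_card subn1 leqnn andbT.
  by apply/subsetP => _ /imsetP [j _ ->]; apply: arc_neq (packing_out_nb pack S_gt1 j uS).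
have := arc_neq _ _ _ uw; rewrite -out_onto => /imsetP [j _ w_eq].
have [->//|ij] := eqVneq i j.
have /disjointP/(_ (u, w) uw) := (pack.2 i j ij).2.
by case; rewrite w_eq; apply: (packing_out_nb pack).
Qed.

Section Internal.
Variable i : I.
Hypothesis Vs_sub : Vs i \subset S.

Lemma internal_out_nb_in u : u \in S -> out_nb (As i) u \in S.
Proof.
move=> uS; have [sub _ _] := pack.1 i.
by case: (subgraphP sub (packing_out_nb pack S_gt1 i uS)) => _ _ /(subsetP Vs_sub).
Qed.

Lemma internal_out_nb_fconnect : {in S &, forall u v, fconnect (out_nb (As i)) u v}.
Proof.
move=> u v uS vS; have [sub S_sub conn] := pack.1 i.
apply: connect_sub (strong_subP conn (subsetP S_sub u uS) (subsetP S_sub v vS)) => a b /= ab.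
have [_ /(subsetP Vs_sub) aS _] := subgraphP sub ab.
by rewrite (packing_out_nb_unique aS ab); exact: fconnect1.
Qed.

End Internal.

Lemma packing_ham_decomposition : exists s, ham_decomposition #|S| s.
Proof.
have Int_card : #|S|.-1 <= #|[set i | Vs i \subset S]|.
  by have := packing_card_internal pack; have := cardsC S; rewrite I_card; lia.
set Int := [set i | Vs i \subset S] in Int_card.
have [i0 i0_Int] : exists i0, i0 \in Int by apply/set0Pn; rewrite -card_gt0; lia.
have [x0 x0S] : exists x0, x0 \in S by apply/set0Pn; rewrite -card_gt0; lia.
pose idx j := nth i0 (enum Int) j.
have idx_Int j : j < #|S|.-1 -> Vs (idx j) \subset S.
  move=> j_lt; suff : idx j \in Int by rewrite inE.
  by rewrite -mem_enum mem_nth // -cardE; lia.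
exists (fun j x => enum_rank_in x0S (out_nb (As (idx j)) (enum_val x))).
split=> [j j_lt|x i j i_lt j_lt].
  have idx_sub := idx_Int j j_lt.
  apply: fconnect_enum_rank_in => [u|]; first exact: internal_out_nb_in.
  exact: internal_out_nb_fconnect.
have out_in k : k < #|S|.-1 -> out_nb (As (idx k)) (enum_val x) \in S.
  by move=> k_lt; apply: internal_out_nb_in (enum_valP x); apply: idx_Int.
move/(enum_rank_in_inj (out_in i i_lt) (out_in j j_lt)).
move/(out_nb_inj pack S_gt1 (enum_valP x))/eqP.
by rewrite nth_uniq ?enum_uniq -?cardE //; [move/eqP | lia | lia].
Qed.

End Recovery.
End CompleteDigraph.

Section Bounds.
Variables (V : finType) (D : rel V) (k : nat).
Hypothesis k_range : 1 < k <= #|V|.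

Lemma kappa_k_le_pred_order : irreflexive D -> kappa_k D k <= #|V| - 1.
Proof.
move=> D_irr; have /card_gt0P [u _] : 0 < #|V| by lia.
exact: leq_trans (kappa_k_le_outdeg D u k_range) (outdeg_irreflexive u D_irr).
Qed.

Lemma complete_of_kappa_k : irreflexive D -> kappa_k D k = #|V| - 1 -> forall u v, D u v = (u != v).
Proof.
move=> D_irr kappa_eq u v; have [->|uv] := eqVneq u v; first exact: D_irr.
apply: contraTT (kappa_k_le_outdeg D u k_range) => /negbTE Duv; rewrite -ltnNge kappa_eq.
have /subset_leq_card : [set w | D u w] \subset [set~ u] :\ v.
  apply/subsetP => w; rewrite !inE => Duw.
  by apply/andP; split; apply: contraTneq Duw => ->; rewrite ?Duv ?D_irr.
by have := cardsD1 v [set~ u]; rewrite !inE eq_sym uv cardsC1 /=; lia.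
Qed.

Hypothesis D_complete : forall u v, D u v = (u != v).

Let D_irr : irreflexive D. Proof. by move=> u; rewrite D_complete eqxx. Qed.

Lemma kappa_k_complete : k != 4 -> k != 6 -> kappa_k D k = #|V| - 1.
Proof.
move=> k_neq4 k_neq6; apply/eqP; rewrite eqn_leq kappa_k_le_pred_order //=.
have n1_le : #|V| - 1 <= #|V| ^ 2 by rewrite expnS expn1; nia.
apply: kappa_k_ge => // S S_card; apply: leq_kappaS n1_le.
have [s s_ham] : exists s, ham_decomposition #|S| s.
  by rewrite S_card; apply: ham_decomposition_exists => //; lia.
by apply: ham_decomposition_packing s_ham; rewrite // S_card; lia.
Qed.

Lemma kappa_k_complete_neq46 : kappa_k D k = #|V| - 1 -> k != 4 /\ k != 6.
Proof.
move=> kappa_eq; have [S _ S_card] : exists2 S : {set V}, S \subset setT & #|S| = k.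
  by apply: exists_subset_card; rewrite cardsT; lia.
have S_gt1 : 1 < #|S| by lia.
have kappaS_eq : kappaS D S = #|V| - 1.
  apply/eqP; rewrite eqn_leq -{2}kappa_eq kappa_k_le // andbT.
  have /card_gt0P [u uS] : 0 < #|S| by lia.
  exact: leq_trans (kappaS_le_outdeg D S_gt1 uS) (outdeg_irreflexive u D_irr).
have := S_packing_kappaS D S; rewrite kappaS_eq => /S_packingP [Vs [As pack]].
have [] := packing_ham_decomposition D_complete S_gt1 pack (card_ord _); rewrite S_card => s s_ham.
split; apply/eqP => k_eq; move: s s_ham; rewrite k_eq.
  exact: no_ham_decomposition4.
exact: no_ham_decomposition6.
Qed.

End Bounds.

Lemma digraph_iso_complete (V : finType) (D : rel V) n : #|V| = n ->
  digraph_iso D (@complete_digraph n) <-> forall u v, D u v = (u != v).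
Proof.
move=> V_card; split=> [[f [/bij_inj f_inj D_f]] u v | D_complete].
  by rewrite D_f /complete_digraph (inj_eq f_inj).
exists (fun v => cast_ord V_card (enum_rank v)); split.
  exists (fun i => enum_val (cast_ord (esym V_card) i)) => [v|i].
    by rewrite cast_ordK enum_rankK.
  by rewrite enum_valK cast_ordKV.
move=> u v; rewrite D_complete /complete_digraph (inj_eq (@cast_ord_inj _ _ V_card)).
by rewrite (inj_eq enum_rank_inj).
Qed.

Definition cycle_digraph n : rel 'I_n := [rel u v | ordS u == v].
Arguments cycle_digraph : clear implicits.

Lemma val_iter_ordS n m (x : 'I_n) : val (iter m (@ordS n) x) = (x + m) %% n.
Proof.
elim: m => [|m IH] /=; first by rewrite addn0 modn_small.
by rewrite IH addnS -[((nat_of_ord x + m) %% n).+1]addn1 modnDml addn1.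
Qed.

Lemma cycle_digraph_irreflexive n : 1 < n -> irreflexive (cycle_digraph n).
Proof.
move=> n_gt1 x; apply/negbTE/eqP => /(congr1 val) /=.
have [x_lt|x_ge] := ltnP x.+1 n; first by rewrite modn_small //; lia.
have x_eq : x.+1 = n by have := ltn_ord x; lia.
by rewrite x_eq modnn; lia.
Qed.

Lemma cycle_digraph_strong n : strong (cycle_digraph n).
Proof.
move=> x y; have -> : y = iter (y + n - x) (@ordS n) x.
  apply: val_inj; rewrite val_iter_ordS (_ : x + (y + n - x) = y + n) ?modnDr ?modn_small //.
  by have := ltn_ord x; lia.
exact: fconnect_iter.
Qed.

Lemma kappa_k_cycle_digraph n k : 1 < k <= n -> kappa_k (cycle_digraph n) k = 1.
Proof.
move=> k_range; apply/eqP; rewrite eqn_leq kappa_k_gt0 ?card_ord ?andbT; last 2 first.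
- exact: cycle_digraph_strong.
- lia.
have /card_gt0P [u _] : 0 < #|'I_n| by rewrite card_ord; lia.
apply: leq_trans (kappa_k_le_outdeg _ u _) _; first by rewrite card_ord.
by rewrite (_ : [set w | _] = [set ordS u]) ?cards1 //; apply/setP => w; rewrite !inE eq_sym.
Qed.

Theorem theorem3p5 (n k : nat) : 2 <= k <= n ->
  (forall (V : finType) (D : rel V), irreflexive D -> #|V| = n -> strong D ->
     1 <= kappa_k D k <= n - 1 /\
     (kappa_k D k = n - 1 <->
        digraph_iso D (@complete_digraph n) /\ k \notin [:: 4; 6]))
  /\ (exists (V : finType) (D : rel V),
        [/\ irreflexive D, #|V| = n, strong D & kappa_k D k = 1])
  /\ (k \notin [:: 4; 6] -> exists (V : finType) (D : rel V),
        [/\ irreflexive D, #|V| = n, strong D & kappa_k D k = n - 1]).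
Proof.
move=> k_range; have not46 : (k \notin [:: 4; 6]) = (k != 4) && (k != 6) by rewrite !inE negb_or.
split; [move=> V D D_irr V_card D_strong; subst n | split; last rewrite not46 => /andP [k4 k6]].
- split.
    apply/andP; split; first by apply: kappa_k_gt0 => //; lia.
    exact: kappa_k_le_pred_order.
  rewrite digraph_iso_complete // not46; split=> [kappa_eq | [D_complete /andP [k4 k6]]].
    have D_complete := complete_of_kappa_k k_range D_irr kappa_eq.
    by have [-> ->] := kappa_k_complete_neq46 k_range D_complete kappa_eq.
  exact: kappa_k_complete.
- exists 'I_n, (cycle_digraph n); split; rewrite ?card_ord //.
  + by apply: cycle_digraph_irreflexive; lia.
  + exact: cycle_digraph_strong.
  + exact: kappa_k_cycle_digraph.
- exists 'I_n, (@complete_digraph n).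
  have D_complete : forall u v, complete_digraph u v = (u != v) by [].
  split; rewrite ?card_ord //.
  + by move=> u; rewrite D_complete eqxx.
  + by move=> u v; have [->|uv] := eqVneq u v; [exact: connect0 | exact: connect1].
  + by rewrite -[in RHS](card_ord n) kappa_k_complete ?card_ord.
Qed.
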